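(* Let $G=(V,E)$ be a bispanning graph, $(S,T)$ a pair of disjoint spanning trees of $G$ with $S\cup T=E$, $m=|E|/2$, and let $\langle(e_1,f_1),\dots,(e_m,f_m)\rangle$ be a unique exchange cyclic base ordering of $G$ and $(S,T)$. Then $\langle(f_m,e_m),\dots,(f_1,e_1)\rangle$ is also a unique exchange cyclic base ordering of $G$ and the same pair $(S,T)$.
   Context: Graphs are finite, undirected, possibly with parallel edges, no loops. A spanning tree is $T\subseteq E$ with $(V,T)$ connected and acyclic; $G$ is bispanning if $E$ is the disjoint union of two spanning trees. For a spanning tree $T$ and $e\notin T$, $C_G(T,e)$ is the edge set of the unique cycle in $T\cup\{e\}$; for $e\in T$, $D_G(T,e)$ is the set of edges of $G$ with one end in each component of $(V,T\setminus\{e\})$. For disjoint spanning trees $A,B$ with $A\cup B=E$: $(e,f)$ with $e\in A,f\in B$ is a unique $S$ edge exchange for $(A,B)$ if $D_G(A,e)\cap C_G(B,e)=\{e,f\}$; $(e,f)$ with $e\in B,f\in A$ is a unique $T$ edge exchange for $(A,B)$ if $D_G(B,e)\cap C_G(A,e)=\{e,f\}$. A unique exchange cyclic base ordering (UECBO) of $G$ and $(S,T)$, $m=|S|=|T|$, is a sequence $\langle(e_1,f_1),\dots,(e_m,f_m)\rangle$ together with orderings $S=\{s_1,\dots,s_m\}$, $T=\{t_1,\dots,t_m\}$ such that for each $i$, $(e_i,f_i)\in\{(s_i,t_i),(t_i,s_i)\}$ is a unique $S$ or $T$ edge exchange for $(\{s_i,\dots,s_m,t_1,\dots,t_{i-1}\},\{t_i,\dots,t_m,s_1,\dots,s_{i-1}\})$.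 *)

(* Finite multigraphs: vertex type V, edge type E (finTypes),
   each edge e has endpoints src e, tgt e (parallel edges allowed; loops are
   excluded by a hypothesis of the theorem). *)
From mathcomp Require Import all_boot.

Set Implicit Arguments.
Unset Strict Implicit.
Unset Printing Implicit Defensive.

Section Graph.
Variables (V E : finType) (src tgt : E -> V).

Definition adj (F : {set E}) : rel V :=
  fun x y => [exists e in F,
    ((src e == x) && (tgt e == y)) || ((src e == y) && (tgt e == x))].

Definition conn (F : {set E}) (x y : V) : bool := connect (adj F) x y.

Definition connectedb (F : {set E}) : bool := [forall x, forall y, conn F x y].

(* (V,F) is acyclic: no edge of F lies on a cycle of F, i.e. removing any
   edge f of F disconnects its endpoints. *)
Definition acyclicb (F : {set E}) : bool :=
  [forall f in F, ~~ conn (F :\ f) (src f) (tgt f)].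

Definition spanning_tree (F : {set E}) : bool := connectedb F && acyclicb F.

Definition bispanning : Prop :=
  exists A B : {set E}, [/\ spanning_tree A, spanning_tree B,
                           [disjoint A & B] & A :|: B = setT].

(* C_G(T,e) for e \notin T: edge set of the unique cycle of T + e, i.e. the
   edges of T + e that lie on a cycle of T + e. *)
Definition fcycle_set (T : {set E}) (e : E) : {set E} :=
  [set f in e |: T | conn ((e |: T) :\ f) (src f) (tgt f)].

(* D_G(T,e) for e \in T: edges with one end in each component of (V, T - e)
   (these components are those of src e and tgt e). *)
Definition fcut_set (T : {set E}) (e : E) : {set E} :=
  [set f | (conn (T :\ e) (src e) (src f) && conn (T :\ e) (tgt e) (tgt f))
        || (conn (T :\ e) (src e) (tgt f) && conn (T :\ e) (tgt e) (src f))].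

(* (e,f) with e \in A, f \in B is a unique exchange from A to B:
   D(A,e) \cap C(B,e) = {e,f}.  Unique S exchange for (A,B) is
   uexch A B e f; unique T exchange for (A,B) is uexch B A e f. *)
Definition uexch (A B : {set E}) (e f : E) : bool :=
  [&& e \in A, f \in B & fcut_set A e :&: fcycle_set B e == [set e; f]].

(* Unique exchange cyclic base ordering of G and (S,T), 0-indexed:
   p = [(e_1,f_1); ...; (e_m,f_m)], s = [s_1;...;s_m], t = [t_1;...;t_m]. *)
Definition UECBO (S T : {set E}) (p : seq (E * E)) : Prop :=
  exists s t : seq E,
    [/\ size s = size p, size t = size p, uniq s & uniq t] /\
    S = [set x in s] /\ T = [set x in t] /\
        (forall (x0 : E) i, i < size p ->
          let si := nth x0 s i in
          let ti := nth x0 t i in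
          let A := [set x in drop i s] :|: [set x in take i t] in
          let B := [set x in drop i t] :|: [set x in take i s] in
          let ef := nth (x0, x0) p i in
          ((ef == (si, ti)) || (ef == (ti, si))) &&
          (uexch A B ef.1 ef.2 || uexch B A ef.1 ef.2)).
End Graph.

(* Performing the i-th exchange (s_i, t_i) turns the pair of trees
   (A_i, B_i) into (A_(i+1), B_(i+1)), and a unique exchange can be undone:
   if (e, f) is a unique exchange from (X, Y), then (f, e) is one from
   (X - e + f, Y - f + e).  Indeed the fundamental cut D(X, e) only depends
   on the two components of X - e, which f also joins, and the fundamental
   cycle C(Y, e) only depends on Y + e = (Y - f + e) + f.  The step of the
   reversed ordering that uses (f_(i+1), e_(i+1)) starts from the pair
   (B_(i+1), A_(i+1)), so it is exactly the undoing of that exchange. *)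
From mathcomp Require Import all_boot.

Set Implicit Arguments.
Unset Strict Implicit.
Unset Printing Implicit Defensive.

Section Exchange.
Variables (V E : finType) (src tgt : E -> V).

Lemma adj_sym (F : {set E}) : symmetric (adj src tgt F).
Proof. by move=> x y; apply: eq_existsb => e; rewrite orbC. Qed.

Lemma conn_sym (F : {set E}) : connect_sym (adj src tgt F).
Proof. exact/sym_connect_sym/adj_sym. Qed.

Lemma fcut_set_exchange (A A' : {set E}) (e f : E) :
  f \in fcut_set src tgt A e -> A' :\ f = A :\ e ->
  fcut_set src tgt A' f = fcut_set src tgt A e.
Proof.
rewrite /fcut_set /conn inE => /orP[] /andP[he1 he2] hA; rewrite hA;
  apply/setP => g; rewrite !inE -!(same_connect (conn_sym _) he1)
  -!(same_connect (conn_sym _) he2) //.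
by rewrite orbC andbC [X in _ || X]andbC.
Qed.

Lemma uexch_exchange (X Y : {set E}) (e f : E) : f \notin X ->
  uexch src tgt X Y e f ->
  uexch src tgt ((X :\ e) :|: [set f]) ((Y :\ f) :|: [set e]) f e.
Proof.
move=> fX /and3P[eX fY /eqP hDC].
have fD : f \in fcut_set src tgt X e.
  by have /setIP[] : f \in fcut_set src tgt X e :&: fcycle_set src tgt Y e
    by rewrite hDC !inE eqxx orbT.
apply/and3P; split; rewrite ?inE ?eqxx ?orbT //.
rewrite (fcut_set_exchange fD); last first.
  apply/setP => x; rewrite !inE.
  by case: (x =P f) => [->|_]; rewrite ?(negbTE fX) ?andbF ?orbF.
have hY : f |: ((Y :\ f) :|: [set e]) = e |: Y.
  apply/setP => y; rewrite !inE.
  by case: (y =P f) => [->|_] /=; rewrite ?fY ?orbT // orbC.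
by rewrite /fcycle_set hY hDC setUC.
Qed.

End Exchange.

(* [stage s t i] is the tree A_i of a cyclic base ordering with orderings
   s of S and t of T; the other tree B_i is [stage t s i]. *)
Definition stage (E : finType) (s t : seq E) (i : nat) : {set E} :=
  [set x in drop i s] :|: [set x in take i t].

Lemma stage_rev (E : finType) (s t : seq E) (j : nat) : size s = size t ->
  stage (rev s) (rev t) j = stage t s (size s - j).
Proof.
move=> eq_st; apply/setP => x.
by rewrite !inE drop_rev take_rev -eq_st !mem_rev orbC.
Qed.

Section Stages.
Variables (E : finType) (x0 : E) (s t : seq E) (i : nat).
Hypotheses (us : uniq s) (ut : uniq t) (dst : [disjoint s & t]).
Hypotheses (his : i < size s) (hit : i < size t).

Lemma nth_notin_stage : nth x0 t i \notin stage s t i.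
Proof.
have ti_t : nth x0 t i \in t by exact: mem_nth.
rewrite !inE (in_take _ ti_t) index_uniq // ltnn orbF.
by apply/negP => /mem_drop; rewrite (disjointFl dst ti_t).
Qed.

Lemma stage_succ :
  (stage s t i :\ nth x0 s i) :|: [set nth x0 t i] = stage s t i.+1.
Proof.
have si_t : nth x0 s i \in t = false by rewrite (disjointFr dst) ?mem_nth.
have : uniq (drop i s) by exact: drop_uniq.
rewrite (drop_nth x0 his) cons_uniq => /andP[si_drop _].
apply/setP => x; rewrite !inE (drop_nth x0 his) (take_nth x0 hit) mem_rcons !inE.
case: (x =P nth x0 s i) => [->|_] /=.
  by rewrite (negbTE si_drop) (contraFF (@mem_take _ _ _ _) si_t) orbF.
by rewrite -orbA [_ || (_ == _)]orbC.
Qed.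

End Stages.

Section StageExchange.
Variables (V E : finType) (src tgt : E -> V) (x0 : E).

Lemma uexch_stage_succ (s t : seq E) (i : nat) :
  uniq s -> uniq t -> [disjoint s & t] -> i < size s -> i < size t ->
  uexch src tgt (stage s t i) (stage t s i) (nth x0 s i) (nth x0 t i) ->
  uexch src tgt (stage s t i.+1) (stage t s i.+1) (nth x0 t i) (nth x0 s i).
Proof.
move=> us ut dst his hit.
have dts : [disjoint t & s] by rewrite disjoint_sym.
rewrite -(stage_succ x0 us dst his hit) -(stage_succ x0 ut dts hit his).
exact/uexch_exchange/nth_notin_stage.
Qed.

Definition exchange_step (A B : {set E}) (si ti e f : E) : bool :=
  (((e, f) == (si, ti)) || ((e, f) == (ti, si))) &&
  (uexch src tgt A B e f || uexch src tgt B A e f).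

Lemma exchange_step_reverse (s t : seq E) (i : nat) (e f : E) :
  uniq s -> uniq t -> [disjoint s & t] -> i < size s -> i < size t ->
  exchange_step (stage s t i) (stage t s i) (nth x0 s i) (nth x0 t i) e f ->
  exchange_step (stage t s i.+1) (stage s t i.+1) (nth x0 s i) (nth x0 t i) f e.
Proof.
move=> us ut dst his hit.
have dts : [disjoint t & s] by rewrite disjoint_sym.
have ti_notin := nth_notin_stage x0 ut dst hit.
have si_notin := nth_notin_stage x0 us dts his.
rewrite /exchange_step !xpair_eqE.
case/andP=> /orP[]/andP[/eqP-> /eqP->] /orP[] hu;
  rewrite !eqxx !andbT ?orbT ?orTb andTb.
- by apply/orP; right; apply: uexch_stage_succ.
- by move: si_notin; case/and3P: hu => ->.
- by move: ti_notin; case/and3P: hu => ->.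
- by apply/orP; left; apply: uexch_stage_succ.
Qed.

End StageExchange.

Theorem mainTheorem6 (V E : finType) (src tgt : E -> V)
  (Hloopless : forall e : E, src e != tgt e)
  (S T : {set E})
  (HS : spanning_tree src tgt S) (HT : spanning_tree src tgt T)
  (HST : [disjoint S & T]) (HU : S :|: T = setT)
  (p : seq (E * E)) :
  UECBO src tgt S T p ->
  UECBO src tgt S T (rev [seq (x.2, x.1) | x <- p]).
Proof.
move=> [s [t [[sz_s sz_t us ut] [S_s [T_t steps]]]]].
have dst : [disjoint s & t].
  have [Ss Tt] : S =i s /\ T =i t by split=> x; rewrite ?S_s ?T_t inE.
  by rewrite -(eq_disjoint Ss) -(eq_disjoint_r Tt).
exists (rev s), (rev t); split; first by rewrite !size_rev size_map sz_s sz_t !rev_uniq.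
split; first by apply/setP => x; rewrite S_s !inE mem_rev.
split; first by apply/setP => x; rewrite T_t !inE mem_rev.
move=> x0 j; rewrite size_rev size_map => hj; cbv zeta.
set i := size p - j.+1.
have hi : i < size p by rewrite /i -subSn // subSS leq_subr.
have sz_j : size p - j = i.+1 by rewrite /i subnSK.
have sz_st : size s = size t by rewrite sz_s.
have [his hit] : i < size s /\ i < size t by rewrite sz_s sz_t.
have [hjs hjt] : j < size s /\ j < size t by rewrite sz_s sz_t.
have nth_pi : nth (x0, x0) (rev [seq (x.2, x.1) | x <- p]) j =
    ((nth (x0, x0) p i).2, (nth (x0, x0) p i).1).
  by rewrite nth_rev size_map // (nth_map (x0, x0)).
rewrite nth_pi -/(stage (rev s) (rev t) j) -/(stage (rev t) (rev s) j).
rewrite (stage_rev j sz_st) (stage_rev j (esym sz_st)) sz_s sz_t sz_j.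
rewrite !nth_rev // sz_s sz_t -/i.
exact: (exchange_step_reverse us ut dst his hit (steps x0 i hi)).
Qed.
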